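(* For integers $\lambda,k,\ell\ge0$ set \[ a_{\lambda,k,\ell} = 4^\lambda \sum_{2^\lambda\leq t<2^{\lambda+1}} \delta(\lambda+1-k,t)\,\delta(\lambda+1-\ell,t). \] Then the generating function $A(x,y,z) = \sum_{\lambda,k,\ell\ge 0} a_{\lambda,k,\ell} x^\lambda y^k z^\ell$ is given by \[ A(x,y,z) = \frac 1{(2-y)(2-z)} \cdot \frac{1+\frac {xz^2}{1-2xz(1+yz)}+\frac{xy^2}{1-2xy(1+yz)}} {1-x(1+yz)^2-\frac{xyz}{1-2xz(1+yz)}-\frac {xyz}{1-2xy(1+yz)}}. \] Furthermore, for every $\lambda\ge0$, \[ \sum_{2^\lambda\leq t<2^{\lambda+1}}c_t^2 = \frac 1{4^\lambda}\sum_{0\le k,\ell\leq \lambda+1}a_{\lambda,k,\ell} \quad\text{and}\quad \sum_{2^\lambda\leq t<2^{\lambda+1}}\tilde c_t^2 = \frac 1{4^\lambda}\sum_{0\le k,\ell\leq \lambda}a_{\lambda,k,\ell}, \] so that \[ \frac 1{2^\lambda} \sum_{2^\lambda\leq t<2^{\lambda+1}}c_t^2 = \frac 1{8^\lambda} \left[x^{\lambda} y^{\lambda+1} z^{\lambda+1}\right] \frac{A(x,y,z)}{(1-y)(1-z)} \] and \[ \frac 1{2^\lambda} \sum_{2^\lambda\leq t<2^{\lambda+1}}\tilde c_t^2 = \frac 1{8^\lambda} \left[x^{\lambda} y^{\lambda} z^{\lambda}\right] \frac{A(x,y,z)}{(1-y)(1-z)}. \]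
   Context: $s(n)$ denotes the binary sum of digits of $n\ge0$. For $k\in\mathbb{Z}$ and $t\ge0$, $\delta(k,t)$ is the asymptotic density of $\{n\ge0: s(n+t)-s(n)=k\}$ (it exists). For $t\ge0$, $c_t$ (resp. $\tilde c_t$) is the asymptotic density of $\{n\ge0: s(n+t)\ge s(n)\}$ (resp. $\{n\ge 0: s(n+t)>s(n)\}$). $[x^ay^bz^c]$ denotes extraction of the coefficient of $x^ay^bz^c$ in a formal power series. *)

From Stdlib Require Import Reals Lra Lia ZArith Arith List.
From Coquelicot Require Import Coquelicot.
Import ListNotations.
Open Scope R_scope.

Definition sumR (f : nat -> R) (l : list nat) : R :=
  fold_right (fun t acc => f t + acc) 0 l.

(* s(n): binary sum of digits of n (bits of n beyond index n are 0) *)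
Definition s (n : nat) : nat :=
  fold_right (fun i acc => (Nat.b2n (Nat.testbit n i) + acc)%nat) 0%nat (seq 0 (S n)).

Definition cnt (P : nat -> bool) (N : nat) : nat := length (filter P (seq 0 N)).

(* asymptotic density (the limit of #{n<N : P n}/N, which exists in all uses below) *)
Definition density (P : nat -> bool) : R :=
  real (Lim_seq (fun N => INR (cnt P N) / INR N)).

Definition delta (k : Z) (t : nat) : R :=
  density (fun n => Z.eqb (Z.of_nat (s (n + t)) - Z.of_nat (s n)) k).

Definition c (t : nat) : R := density (fun n => Nat.leb (s n) (s (n + t))).
Definition ct (t : nat) : R := density (fun n => Nat.ltb (s n) (s (n + t))).

Definition block (lam : nat) : list nat := seq (2 ^ lam) (2 ^ lam).

Definition a (lam k l : nat) : R :=
  4 ^ lam * sumR (fun t => delta (Z.of_nat (lam + 1) - Z.of_nat k) t *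
                           delta (Z.of_nat (lam + 1) - Z.of_nat l) t) (block lam).

(* f i j k = coefficient of x^i y^j z^k *)
Definition fps := nat -> nat -> nat -> R.

Definition fconst (r : R) : fps := fun i j k =>
  match i, j, k with 0, 0, 0 => r | _, _, _ => 0 end.
Definition fX : fps := fun i j k =>
  match i, j, k with 1, 0, 0 => 1 | _, _, _ => 0 end.
Definition fY : fps := fun i j k =>
  match i, j, k with 0, 1, 0 => 1 | _, _, _ => 0 end.
Definition fZ : fps := fun i j k =>
  match i, j, k with 0, 0, 1 => 1 | _, _, _ => 0 end.
Definition fadd (f g : fps) : fps := fun i j k => f i j k + g i j k.
Definition fsub (f g : fps) : fps := fun i j k => f i j k - g i j k.
Definition fscale (r : R) (f : fps) : fps := fun i j k => r * f i j k.
Definition fmul (f g : fps) : fps := fun i j k =>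
  sumR (fun i1 => sumR (fun j1 => sumR (fun k1 =>
      f i1 j1 k1 * g (i - i1)%nat (j - j1)%nat (k - k1)%nat)
    (seq 0 (S k))) (seq 0 (S j))) (seq 0 (S i)).
Fixpoint fpow (f : fps) (n : nat) : fps :=
  match n with O => fconst 1 | S m => fmul f (fpow f m) end.

(* Multiplicative inverse of a series f with f_{000} <> 0:
   1/f = (1/f0) * sum_n g^n with g = 1 - f/f0 (g has zero constant term, so
   for the coefficient of x^i y^j z^k only n <= i+j+k contribute). *)
Definition finv (f : fps) : fps := fun i j k =>
  let g := fsub (fconst 1) (fscale (/ f 0%nat 0%nat 0%nat) f) in
  / f 0%nat 0%nat 0%nat * sumR (fun n => fpow g n i j k) (seq 0 (S (i + j + k))).
Definition fdiv (f g : fps) : fps := fmul f (finv g).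

Definition coef (f : fps) (i j k : nat) : R := f i j k.

Declare Scope fps_scope.
Delimit Scope fps_scope with FPS.
Notation "f + g" := (fadd f g) : fps_scope.
Notation "f - g" := (fsub f g) : fps_scope.
Notation "f * g" := (fmul f g) : fps_scope.
Notation "f / g" := (fdiv f g) : fps_scope.

Definition Agen : fps := fun lam k l => a lam k l.

Definition fone := fconst 1.
Definition ftwo := fconst 2.

Definition Aclosed : fps :=
  let yz1 := (fone + fY * fZ)%FPS in
  let u := (fone - ftwo * fX * fZ * yz1)%FPS in
  let v := (fone - ftwo * fX * fY * yz1)%FPS in
  (fone / ((ftwo - fY) * (ftwo - fZ))
   * ((fone + (fX * fZ * fZ) / u + (fX * fY * fY) / v)
      / (fone - fX * yz1 * yz1 - (fX * fY * fZ) / u - (fX * fY * fZ) / v)))%FPS.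

From Stdlib Require Import Reals Lra Lia ZArith Arith List.
From Stdlib Require Import FunctionalExtensionality Setoid Morphisms.
From Coquelicot Require Import Coquelicot.
Import ListNotations.
Open Scope R_scope.

(** Put [G_lam t k = 2 ^ lam * delta (lam + 1 - k) t].  Since [s (2n) = s n] and
    [s (2n + 1) = s n + 1], one has [delta k (2t) = delta k t] and
    [delta k (2t + 1) = (delta (k - 1) t + delta (k + 1) (t + 1)) / 2]; hence [G_(lam+1) (2t)]
    and [G_(lam+1) (2t + 1)] are [G_lam t] and [G_lam (t + 1)] shifted in [k]
    (with [delta k t = 0] for [k > s t] killing the boundary terms).  Summing products over the
    block [2^lam <= t < 2^(lam+1)] expresses the correlations [sum G t * G t] (which is [A]),
    [sum G t * G (t + 1)] and [sum G (t + 1) * G t] at level [lam + 1] through the same three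
    sums at level [lam] (the fourth, [sum G (t + 1) * G (t + 1)], equals [A] because
    [delta k (2 ^ (lam + 1)) = delta k (2 ^ lam)]).  This is a linear system for the three
    generating functions, with initial values [1 / ((2 - y) (2 - z))]; eliminating the two
    auxiliary ones gives the closed form.  For the second half, [c t] and [ct t] are the sums
    of [delta j t] over [j >= 0], resp. [j >= 1], and only [j <= s t <= lam + 1] contribute. *)

(** * Finite sums *)

Lemma sumR_cons (f : nat -> R) x l : sumR f (x :: l) = f x + sumR f l.
Proof. reflexivity. Qed.

Lemma sumR_app (f : nat -> R) l1 l2 : sumR f (l1 ++ l2) = sumR f l1 + sumR f l2.
Proof. unfold sumR; induction l1 as [|x l1 IH]; cbn; [ring | rewrite IH; ring]. Qed.

Lemma sumR_ext_in (f g : nat -> R) l :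
  (forall x, In x l -> f x = g x) -> sumR f l = sumR g l.
Proof.
  induction l as [|x l IH]; intros H; [reflexivity|].
  rewrite !sumR_cons, H, IH; auto with datatypes.
Qed.

Lemma sumR_ext (f g : nat -> R) l : (forall x, f x = g x) -> sumR f l = sumR g l.
Proof. intros H; apply sumR_ext_in; auto. Qed.

#[export] Instance sumR_Proper : Proper (pointwise_relation nat eq ==> eq ==> eq) sumR.
Proof. intros f g H l _ <-. now apply sumR_ext. Qed.

Lemma sumR_zero (f : nat -> R) l : (forall x, In x l -> f x = 0) -> sumR f l = 0.
Proof.
  induction l as [|x l IH]; intros H; [reflexivity|].
  rewrite sumR_cons, H, IH; auto with datatypes; ring.
Qed.

Lemma sumR_plus (f g : nat -> R) l : sumR (fun x => f x + g x) l = sumR f l + sumR g l.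
Proof. unfold sumR; induction l as [|x l IH]; cbn; [ring | rewrite IH; ring]. Qed.

Lemma sumR_scal_l (r : R) (f : nat -> R) l : sumR (fun x => r * f x) l = r * sumR f l.
Proof. unfold sumR; induction l as [|x l IH]; cbn; [ring | rewrite IH; ring]. Qed.

Lemma sumR_scal_r (r : R) (f : nat -> R) l : sumR (fun x => f x * r) l = sumR f l * r.
Proof. unfold sumR; induction l as [|x l IH]; cbn; [ring | rewrite IH; ring]. Qed.

Lemma sumR_swap (f : nat -> nat -> R) l1 l2 :
  sumR (fun x => sumR (fun y => f x y) l2) l1 = sumR (fun y => sumR (fun x => f x y) l1) l2.
Proof.
  induction l1 as [|x l1 IH].
  - symmetry; now apply sumR_zero.
  - rewrite sumR_cons, IH, <- sumR_plus. reflexivity.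
Qed.

Lemma sumR_mul_sumR (f g : nat -> R) l1 l2 :
  sumR f l1 * sumR g l2 = sumR (fun x => sumR (fun y => f x * g y) l2) l1.
Proof.
  induction l1 as [|x l1 IH]; [cbn; ring|].
  rewrite !sumR_cons, <- IH, sumR_scal_l. ring.
Qed.

Lemma sumR_map (f : nat -> R) (g : nat -> nat) l : sumR f (map g l) = sumR (fun x => f (g x)) l.
Proof. induction l as [|x l IH]; [reflexivity|]. cbn [map]. now rewrite !sumR_cons, IH. Qed.

Lemma sumR_seq_succ (f : nat -> R) a n : sumR f (seq a (S n)) = sumR f (seq a n) + f (a + n)%nat.
Proof. rewrite seq_S, sumR_app. cbn. ring. Qed.

Lemma sumR_seq_double (f : nat -> R) a n :
  sumR f (seq (2 * a) (2 * n)) = sumR (fun t => f (2 * t)%nat + f (2 * t + 1)%nat) (seq a n).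
Proof.
  induction n as [|n IH]; [reflexivity|].
  replace (2 * S n)%nat with (S (S (2 * n))) by lia.
  rewrite !sumR_seq_succ, IH.
  replace (2 * a + S (2 * n))%nat with (2 * (a + n) + 1)%nat by lia.
  replace (2 * a + 2 * n)%nat with (2 * (a + n))%nat by lia. ring.
Qed.

Lemma sumR_seq_shift1 (f : nat -> R) a n :
  sumR (fun t => f (S t)) (seq a n) = sumR f (seq a n) - f a + f (a + n)%nat.
Proof.
  revert a; induction n as [|n IH]; intros a.
  - rewrite Nat.add_0_r. cbn. ring.
  - cbn [seq]. rewrite !sumR_cons, IH, Nat.add_succ_r, Nat.add_succ_l. ring.
Qed.

Definition sum_upto (n : nat) (F : nat -> R) : R := sumR F (seq 0 (S n)).

Lemma sum_upto_ext n F G : (forall a, (a <= n)%nat -> F a = G a) -> sum_upto n F = sum_upto n G.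
Proof. intros H. apply sumR_ext_in. intros a Ha%in_seq. apply H. lia. Qed.

#[export] Instance sum_upto_Proper : Proper (eq ==> pointwise_relation nat eq ==> eq) sum_upto.
Proof. intros n _ <- F G H. apply sum_upto_ext. auto. Qed.

Lemma sum_upto_0 F : sum_upto 0 F = F 0%nat.
Proof. unfold sum_upto; cbn. ring. Qed.

Lemma sum_upto_succ n F : sum_upto (S n) F = sum_upto n F + F (S n).
Proof. apply sumR_seq_succ. Qed.

Lemma sum_upto_succ_l n F : sum_upto (S n) F = F 0%nat + sum_upto n (fun a => F (S a)).
Proof.
  unfold sum_upto. change (seq 0 (S (S n))) with (0%nat :: seq 1 (S n)).
  rewrite sumR_cons, <- (seq_shift (S n) 0), sumR_map. reflexivity. Qed.

Lemma sum_upto_zero n F : (forall a, (a <= n)%nat -> F a = 0) -> sum_upto n F = 0.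
Proof. intros H. rewrite (sum_upto_ext n F (fun _ => 0)) by auto. now apply sumR_zero. Qed.

Lemma sum_upto_single n p F :
  (forall a, a <> p -> F a = 0) -> sum_upto n F = if Nat.leb p n then F p else 0.
Proof.
  intros H. induction n as [|n IH].
  - rewrite sum_upto_0. destruct (Nat.leb_spec p 0) as [Hp|Hp].
    + now replace p with 0%nat by lia.
    + apply H; lia.
  - rewrite sum_upto_succ, IH.
    destruct (Nat.leb_spec p n), (Nat.leb_spec p (S n)); try lia.
    + rewrite (H (S n)) by lia. ring.
    + replace p with (S n) by lia. ring.
    + rewrite (H (S n)) by lia. ring.
Qed.

Lemma sum_upto_rev n F : sum_upto n F = sum_upto n (fun a => F (n - a)%nat).
Proof.
  revert F; induction n as [|n IH]; intros F; [reflexivity|].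
  rewrite sum_upto_succ_l, sum_upto_succ, IH, Nat.sub_diag, Rplus_comm. f_equal.
  apply sum_upto_ext. intros a Ha. f_equal. lia.
Qed.

Lemma sum_upto_swap n m (F : nat -> nat -> R) :
  sum_upto n (fun a => sum_upto m (fun b => F a b))
  = sum_upto m (fun b => sum_upto n (fun a => F a b)).
Proof. apply sumR_swap. Qed.

Lemma sum_upto_triangle n (F : nat -> nat -> R) :
  sum_upto n (fun a => sum_upto a (fun b => F a b))
  = sum_upto n (fun b => sum_upto (n - b) (fun c => F (b + c)%nat b)).
Proof.
  induction n as [|n IH]; [reflexivity|].
  rewrite sum_upto_succ, IH, (sum_upto_succ n (fun b => sum_upto (S n - b) _)).
  rewrite Nat.sub_diag, sum_upto_0.
  rewrite (sum_upto_ext n (fun b => sum_upto (S n - b) _)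
             (fun b => sum_upto (n - b) (fun c => F (b + c)%nat b) + F (S n) b)).
  - rewrite (sum_upto_succ n (fun b => F (S n) b)). unfold sum_upto.
    rewrite sumR_plus, Nat.add_0_r. change (fun b => F (S n) b) with (F (S n)). ring.
  - intros b Hb. replace (S n - b)%nat with (S (n - b)) by lia.
    rewrite sum_upto_succ. do 2 f_equal. lia.
Qed.

Lemma sum_upto_plus n F G : sum_upto n (fun a => F a + G a) = sum_upto n F + sum_upto n G.
Proof. apply sumR_plus. Qed.

Lemma sum_upto_scal_l n F r : r * sum_upto n F = sum_upto n (fun a => r * F a).
Proof. symmetry. apply sumR_scal_l. Qed.

Lemma sum_upto_scal_r n F r : sum_upto n F * r = sum_upto n (fun a => F a * r).
Proof. symmetry. apply sumR_scal_r. Qed.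

(** * Binary digit sums *)

Definition bitsum (n B : nat) : nat :=
  fold_right (fun i acc => (Nat.b2n (Nat.testbit n i) + acc)%nat) 0%nat (seq 0 B).

Lemma bitsum_succ n B : bitsum n (S B) = (Nat.b2n (Nat.odd n) + bitsum (Nat.div2 n) B)%nat.
Proof.
  unfold bitsum. change (seq 0 (S B)) with (0%nat :: seq 1 B).
  rewrite <- seq_shift. cbn [fold_right]. rewrite Nat.bit0_odd. f_equal.
  induction (seq 0 B) as [|i l IH]; cbn; [reflexivity|].
  now rewrite IH, Nat.testbit_div2.
Qed.

Lemma bitsum_succ_high n B : (n <= B)%nat -> bitsum n (S B) = bitsum n B.
Proof.
  intros HB. unfold bitsum. rewrite seq_S, fold_right_app. cbn [fold_right].
  replace (Nat.testbit n (0 + B)) with false; [reflexivity|].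
  destruct n as [|n]; [symmetry; apply Nat.bits_0|].
  symmetry. apply Nat.bits_above_log2. pose proof (Nat.log2_lt_lin (S n)). lia.
Qed.

Lemma s_eq_bitsum n B : (n <= B)%nat -> s n = bitsum n B.
Proof.
  induction 1 as [|B HB IH].
  - exact (bitsum_succ_high n n (le_n n)).
  - now rewrite bitsum_succ_high.
Qed.

Lemma s_double m : s (2 * m) = s m.
Proof.
  rewrite (s_eq_bitsum (2 * m) (S (2 * m))), bitsum_succ by lia.
  rewrite Nat.odd_mul, Nat.div2_double, <- s_eq_bitsum by lia. reflexivity.
Qed.

Lemma s_double_plus1 m : s (2 * m + 1) = S (s m).
Proof.
  rewrite (s_eq_bitsum (2 * m + 1) (S (2 * m + 1))), bitsum_succ by lia.
  rewrite Nat.add_1_r, Nat.odd_succ, Nat.even_mul, Nat.div2_succ_double, <- s_eq_bitsum by lia.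
  reflexivity.
Qed.

Lemma s_add_le a b : (s (a + b) <= s a + s b)%nat.
Proof.
  remember (a + b)%nat as n eqn:Hn. revert a b Hn.
  induction n as [n IH] using lt_wf_ind. intros a b ->.
  destruct (Nat.Even_or_Odd a) as [[x ->]|[x ->]], (Nat.Even_or_Odd b) as [[y ->]|[y ->]].
  - destruct x as [|x]; [cbn; lia|].
    replace (2 * S x + 2 * y)%nat with (2 * (S x + y))%nat by lia.
    rewrite !s_double. apply (IH (S x + y)%nat); lia.
  - replace (2 * x + (2 * y + 1))%nat with (2 * (x + y) + 1)%nat by lia.
    rewrite !s_double_plus1, s_double.
    destruct x as [|x]; [cbn; lia|].
    specialize (IH (S x + y)%nat ltac:(lia) (S x) y eq_refl). lia.
  - replace (2 * x + 1 + 2 * y)%nat with (2 * (x + y) + 1)%nat by lia.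
    rewrite !s_double_plus1, s_double.
    specialize (IH (x + y)%nat ltac:(lia) x y eq_refl). lia.
  - (* the carry: s (x + y + 1) <= s (x + y) + s 1 *)
    replace (2 * x + 1 + (2 * y + 1))%nat with (2 * (x + y + 1))%nat by lia.
    rewrite !s_double_plus1, s_double.
    pose proof (IH (x + y)%nat ltac:(lia) x y eq_refl).
    pose proof (IH (x + y + 1)%nat ltac:(lia) (x + y)%nat 1%nat eq_refl).
    change (s 1) with 1%nat in *. lia.
Qed.

Lemma s_le_of_lt_pow2 m n : (n < 2 ^ m)%nat -> (s n <= m)%nat.
Proof.
  revert n; induction m as [|m IH]; intros n Hn.
  - replace n with 0%nat by (cbn in Hn; lia). reflexivity.
  - rewrite Nat.pow_succ_r' in Hn.
    destruct (Nat.Even_or_Odd n) as [[x ->]|[x ->]];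
      [rewrite s_double | rewrite s_double_plus1]; specialize (IH x ltac:(lia)); lia.
Qed.

Lemma s_pow2 m : s (2 ^ m) = 1%nat.
Proof. induction m as [|m IH]; [reflexivity|]. now rewrite Nat.pow_succ_r', s_double. Qed.

Lemma s_le_of_le_pow2 m n : (1 <= m)%nat -> (n <= 2 ^ m)%nat -> (s n <= m)%nat.
Proof.
  intros Hm Hn. destruct (Nat.eq_dec n (2 ^ m)) as [->|Hne].
  - rewrite s_pow2. exact Hm.
  - apply s_le_of_lt_pow2. lia.
Qed.

(** * Asymptotic densities *)

Lemma cnt_S P N : cnt P (S N) = (cnt P N + if P N then 1 else 0)%nat.
Proof. unfold cnt. rewrite seq_S, filter_app, length_app. cbn. destruct (P N); reflexivity. Qed.

Lemma cnt_le P N : (cnt P N <= N)%nat.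
Proof. induction N as [|N IH]; [reflexivity|]. rewrite cnt_S. destruct (P N); lia. Qed.

Lemma cnt_ext P Q N : (forall n, P n = Q n) -> cnt P N = cnt Q N.
Proof. intros H. induction N as [|N IH]; [reflexivity|]. now rewrite !cnt_S, IH, H. Qed.

Lemma cnt_double P M :
  cnt P (2 * M) = (cnt (fun m => P (2 * m)%nat) M + cnt (fun m => P (2 * m + 1)%nat) M)%nat.
Proof.
  induction M as [|M IH]; [reflexivity|].
  replace (2 * S M)%nat with (S (S (2 * M))) by lia.
  rewrite !cnt_S, IH. replace (S (2 * M)) with (2 * M + 1)%nat by lia.
  destruct (P (2 * M)%nat), (P (2 * M + 1)%nat); lia.
Qed.

Definition ratio (P : nat -> bool) (N : nat) : R := INR (cnt P N) / INR N.

Definition has_density (P : nat -> bool) (L : R) : Prop := is_lim_seq (ratio P) L.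

Lemma density_eq P L : has_density P L -> density P = L.
Proof. intros H. unfold density. fold (ratio P). now rewrite (is_lim_seq_unique _ _ H). Qed.

Lemma has_density_const P (b : bool) :
  (forall n, P n = b) -> has_density P (if b then 1 else 0).
Proof.
  intros H. apply is_lim_seq_incr_1.
  apply (is_lim_seq_ext (fun _ => if b then 1 else 0)); [|apply is_lim_seq_const].
  intros N. unfold ratio. rewrite (cnt_ext P (fun _ => b)) by auto.
  assert (Hcnt : cnt (fun _ => b) (S N) = if b then S N else 0%nat).
  { induction N as [|N IH]; [now destruct b|]. rewrite cnt_S, IH. destruct b; lia. }
  rewrite Hcnt. destruct b; cbv iota; [field | rewrite Rdiv_0_l; reflexivity].
  apply not_0_INR. lia.
Qed.

Lemma is_lim_seq_even_odd (u : nat -> R) (L : R) :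
  is_lim_seq (fun M => u (2 * M)%nat) L -> is_lim_seq (fun M => u (2 * M + 1)%nat) L ->
  is_lim_seq u L.
Proof.
  rewrite <- !is_lim_seq_spec. intros Heven Hodd eps.
  destruct (Heven eps) as [N1 H1], (Hodd eps) as [N2 H2].
  exists (2 * (N1 + N2))%nat. intros n Hn.
  destruct (Nat.Even_or_Odd n) as [[M ->]|[M ->]]; [apply H1 | apply H2]; lia.
Qed.

Lemma ratio_succ_close P N : Rabs (ratio P (S N) - ratio P N) <= / INR (S N).
Proof.
  unfold ratio. rewrite cnt_S, plus_INR.
  pose proof (le_INR _ _ (cnt_le P N)) as Hle. pose proof (pos_INR (cnt P N)).
  assert (He : (if P N then 1 else 0)%nat = 0%nat \/ (if P N then 1 else 0)%nat = 1%nat)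
    by (destruct (P N); auto).
  destruct N as [|N].
  - cbn [INR] in *. replace (INR (cnt P 0)) with 0 by lra.
    rewrite Rdiv_0_r, Rinv_1, Rdiv_1_r, Rplus_0_l, Rminus_0_r.
    destruct He as [-> | ->]; cbn; rewrite ?Rabs_R0, ?Rabs_R1; lra.
  - set (n := INR (S N)) in *. set (c := INR (cnt P (S N))) in *.
    assert (Hn : 0 < n) by (apply lt_0_INR; lia).
    rewrite S_INR. fold n.
    (* the difference is (e n - c) / (n (n + 1)) with e in {0, 1} and 0 <= c <= n *)
    replace ((c + INR (if P (S N) then 1 else 0)) / (n + 1) - c / n)
      with ((INR (if P (S N) then 1 else 0) * n - c) / (n * (n + 1))) by (field; lra).
    unfold Rdiv. rewrite Rabs_mult, Rabs_inv, (Rabs_pos_eq (n * (n + 1))) by nra.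
    apply Rmult_le_reg_r with (n * (n + 1)); [nra|].
    rewrite Rmult_assoc, Rinv_l, Rmult_1_r by nra.
    replace (/ (n + 1) * (n * (n + 1))) with n by (field; lra).
    apply Rabs_le. destruct He as [-> | ->]; [rewrite INR_0 | rewrite INR_1]; lra.
Qed.

Lemma is_lim_seq_inv_INR : is_lim_seq (fun n => / INR n) 0.
Proof.
  change (Finite 0) with (Rbar_inv p_infty).
  apply is_lim_seq_inv; [apply is_lim_seq_INR | discriminate].
Qed.

Lemma has_density_of_even P (L : R) :
  is_lim_seq (fun M => ratio P (2 * M)) L -> has_density P L.
Proof.
  intros Heven. apply is_lim_seq_even_odd; [exact Heven|].
  assert (Hgap : is_lim_seq (fun M => ratio P (2 * M + 1) - ratio P (2 * M)) 0).
  { apply is_lim_seq_abs_0.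
    apply is_lim_seq_le_le with (fun _ => 0) (fun M => / INR (S (2 * M))).
    - intros M. split; [apply Rabs_pos|]. rewrite Nat.add_1_r. apply ratio_succ_close.
    - apply is_lim_seq_const.
    - apply (is_lim_seq_subseq (fun n => / INR n) _ (fun M => S (2 * M))), is_lim_seq_inv_INR.
      apply eventually_subseq. intros; lia. }
  replace L with (0 + L) by ring.
  apply (is_lim_seq_ext (fun M => (ratio P (2 * M + 1) - ratio P (2 * M)) + ratio P (2 * M))).
  - intros M. ring.
  - now apply is_lim_seq_plus'.
Qed.

(** * The densities [delta] *)

Definition sdiff (n t : nat) : Z := (Z.of_nat (s (n + t)) - Z.of_nat (s n))%Z.

Definition sdiff_is (k : Z) (t n : nat) : bool := Z.eqb (sdiff n t) k.

Lemma sdiff_even_even m t : sdiff (2 * m) (2 * t) = sdiff m t.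
Proof.
  unfold sdiff. replace (2 * m + 2 * t)%nat with (2 * (m + t))%nat by lia.
  now rewrite !s_double.
Qed.

Lemma sdiff_odd_even m t : sdiff (2 * m + 1) (2 * t) = sdiff m t.
Proof.
  unfold sdiff. replace (2 * m + 1 + 2 * t)%nat with (2 * (m + t) + 1)%nat by lia.
  rewrite !s_double_plus1. lia.
Qed.

Lemma sdiff_even_odd m t : sdiff (2 * m) (2 * t + 1) = (sdiff m t + 1)%Z.
Proof.
  unfold sdiff. replace (2 * m + (2 * t + 1))%nat with (2 * (m + t) + 1)%nat by lia.
  rewrite s_double_plus1, s_double. lia.
Qed.

Lemma sdiff_odd_odd m t : sdiff (2 * m + 1) (2 * t + 1) = (sdiff m (t + 1) - 1)%Z.
Proof.
  unfold sdiff. replace (2 * m + 1 + (2 * t + 1))%nat with (2 * (m + (t + 1)))%nat by lia.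
  rewrite s_double_plus1, s_double. lia.
Qed.

Lemma sdiff_le n t : (sdiff n t <= Z.of_nat (s t))%Z.
Proof. unfold sdiff. pose proof (s_add_le n t). lia. Qed.

Lemma has_density_sdiff_double k t L :
  has_density (sdiff_is k t) L -> has_density (sdiff_is k (2 * t)) L.
Proof.
  intros H. apply has_density_of_even. apply is_lim_seq_incr_1 in H. apply is_lim_seq_incr_1.
  revert H. apply is_lim_seq_ext. intros M. unfold ratio. rewrite cnt_double.
  rewrite (cnt_ext (fun m => sdiff_is k (2 * t) (2 * m)) (sdiff_is k t))
    by (intros m; unfold sdiff_is; now rewrite sdiff_even_even).
  rewrite (cnt_ext (fun m => sdiff_is k (2 * t) (2 * m + 1)) (sdiff_is k t))
    by (intros m; unfold sdiff_is; now rewrite sdiff_odd_even).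
  rewrite plus_INR, mult_INR. replace (INR 2) with 2 by (cbn; ring).
  field. apply not_0_INR. lia.
Qed.

Lemma has_density_sdiff_double_plus1 k t L1 L2 :
  has_density (sdiff_is (k - 1) t) L1 -> has_density (sdiff_is (k + 1) (t + 1)) L2 ->
  has_density (sdiff_is k (2 * t + 1)) ((L1 + L2) / 2).
Proof.
  intros H1 H2. apply has_density_of_even.
  assert (H := is_lim_seq_scal_l _ (/ 2) _ (is_lim_seq_plus' _ _ _ _ H1 H2)).
  replace ((L1 + L2) / 2) with (/ 2 * (L1 + L2)) by field.
  apply is_lim_seq_incr_1 in H. apply is_lim_seq_incr_1.
  revert H. apply is_lim_seq_ext. intros M. unfold ratio. rewrite cnt_double.
  rewrite (cnt_ext (fun m => sdiff_is k (2 * t + 1) (2 * m)) (sdiff_is (k - 1) t)).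
  2:{ intros m; unfold sdiff_is; rewrite sdiff_even_odd.
      apply Bool.eq_true_iff_eq. rewrite !Z.eqb_eq. lia. }
  rewrite (cnt_ext (fun m => sdiff_is k (2 * t + 1) (2 * m + 1)) (sdiff_is (k + 1) (t + 1))).
  2:{ intros m; unfold sdiff_is; rewrite sdiff_odd_odd.
      apply Bool.eq_true_iff_eq. rewrite !Z.eqb_eq. lia. }
  rewrite plus_INR, mult_INR. replace (INR 2) with 2 by (cbn; ring).
  field. apply not_0_INR. lia.
Qed.

Lemma has_density_sdiff_high k t : (Z.of_nat (s t) < k)%Z -> has_density (sdiff_is k t) 0.
Proof.
  intros H. apply (has_density_const _ false). intros n.
  apply Z.eqb_neq. pose proof (sdiff_le n t). lia.
Qed.

Lemma has_density_sdiff_0 k : has_density (sdiff_is k 0) (if Z.eqb 0 k then 1 else 0).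
Proof.
  apply has_density_const. intros n. unfold sdiff_is, sdiff.
  rewrite Nat.add_0_r, Z.sub_diag. reflexivity.
Qed.

Lemma has_density_sdiff_1 j : has_density (sdiff_is (1 - Z.of_nat j) 1) ((/ 2) ^ S j).
Proof.
  change (sdiff_is ?k 1) with (sdiff_is k (2 * 0 + 1)).
  induction j as [|j IH].
  - replace ((/ 2) ^ 1) with ((1 + 0) / 2) by field.
    apply has_density_sdiff_double_plus1; [apply has_density_sdiff_0|].
    apply has_density_sdiff_high. reflexivity.
  - replace ((/ 2) ^ S (S j)) with ((0 + (/ 2) ^ S j) / 2) by (cbn; field).
    apply has_density_sdiff_double_plus1.
    + pose proof (has_density_sdiff_0 (1 - Z.of_nat (S j) - 1)) as H0.
      now rewrite (proj2 (Z.eqb_neq _ _)) in H0 by lia.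
    + now replace (1 - Z.of_nat (S j) + 1)%Z with (1 - Z.of_nat j)%Z by lia.
Qed.

Lemma sdiff_is_has_density t : forall k, exists L, has_density (sdiff_is k t) L.
Proof.
  induction t as [t IH] using lt_wf_ind. intros k.
  destruct t as [|[|t']].
  - eexists; apply has_density_sdiff_0.
  - destruct (Z_lt_le_dec 1 k).
    + exists 0. apply has_density_sdiff_high. cbn. lia.
    + exists ((/ 2) ^ S (Z.to_nat (1 - k))).
      replace k with (1 - Z.of_nat (Z.to_nat (1 - k)))%Z at 1 by lia.
      apply has_density_sdiff_1.
  - destruct (Nat.Even_or_Odd (S (S t'))) as [[m Hm]|[m Hm]]; rewrite Hm in *.
    + destruct (IH m ltac:(lia) k) as [L HL].
      exists L. now apply has_density_sdiff_double.
    + destruct (IH m ltac:(lia) (k - 1)%Z) as [L1 H1].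
      destruct (IH (m + 1)%nat ltac:(lia) (k + 1)%Z) as [L2 H2].
      eexists. exact (has_density_sdiff_double_plus1 _ _ _ _ H1 H2).
Qed.

Lemma delta_has_density k t : has_density (sdiff_is k t) (delta k t).
Proof.
  destruct (sdiff_is_has_density t k) as [L HL].
  change (delta k t) with (density (sdiff_is k t)). now rewrite (density_eq _ _ HL).
Qed.

Lemma delta_double k t : delta k (2 * t) = delta k t.
Proof. apply density_eq, has_density_sdiff_double, delta_has_density. Qed.

Lemma delta_double_plus1 k t :
  delta k (2 * t + 1) = (delta (k - 1) t + delta (k + 1) (t + 1)) / 2.
Proof. apply density_eq, has_density_sdiff_double_plus1; apply delta_has_density. Qed.

Lemma delta_high k t : (Z.of_nat (s t) < k)%Z -> delta k t = 0.
Proof. intros H. now apply density_eq, has_density_sdiff_high. Qed.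

Lemma delta_1 j : delta (1 - Z.of_nat j) 1 = (/ 2) ^ S j.
Proof. apply density_eq, has_density_sdiff_1. Qed.

Lemma delta_pow2 k m : delta k (2 ^ m) = delta k 1.
Proof. induction m as [|m IH]; [reflexivity|]. now rewrite Nat.pow_succ_r', delta_double. Qed.

(** * Formal power series in three variables *)

Lemma fps_ext (f g : fps) : (forall i j k, f i j k = g i j k) -> f = g.
Proof. intros H. do 3 (apply functional_extensionality; intro). apply H. Qed.

Lemma fmul_eq f g i j k :
  fmul f g i j k = sum_upto i (fun i1 => sum_upto j (fun j1 => sum_upto k (fun k1 =>
    f i1 j1 k1 * g (i - i1)%nat (j - j1)%nat (k - k1)%nat))).
Proof. reflexivity. Qed.

Lemma fmul_comm f g : fmul f g = fmul g f.
Proof.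
  apply fps_ext. intros i j k. rewrite !fmul_eq.
  rewrite sum_upto_rev. apply sum_upto_ext. intros a Ha.
  rewrite sum_upto_rev. apply sum_upto_ext. intros b Hb.
  rewrite sum_upto_rev. apply sum_upto_ext. intros d Hd.
  replace (i - (i - a))%nat with a by lia. replace (j - (j - b))%nat with b by lia.
  replace (k - (k - d))%nat with d by lia. ring.
Qed.

Lemma fmul_assoc f g h : fmul (fmul f g) h = fmul f (fmul g h).
Proof.
  apply fps_ext. intros i j k. rewrite !fmul_eq. setoid_rewrite fmul_eq.
  repeat setoid_rewrite sum_upto_scal_r. repeat setoid_rewrite sum_upto_scal_l.
  transitivity (sum_upto i (fun a1 => sum_upto a1 (fun b1 =>
     sum_upto j (fun a2 => sum_upto a2 (fun b2 =>
     sum_upto k (fun a3 => sum_upto a3 (fun b3 =>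
       f b1 b2 b3 * g (a1 - b1)%nat (a2 - b2)%nat (a3 - b3)%nat
       * h (i - a1)%nat (j - a2)%nat (k - a3)%nat))))))).
  { apply sum_upto_ext. intros a1 _.
    setoid_rewrite (sum_upto_swap k a1). rewrite (sum_upto_swap j a1).
    apply sum_upto_ext. intros b1 _. apply sum_upto_ext. intros a2 _.
    now rewrite (sum_upto_swap k a2). }
  rewrite sum_upto_triangle.
  setoid_rewrite (sum_upto_triangle j). setoid_rewrite (sum_upto_triangle k).
  apply sum_upto_ext. intros b1 _.
  setoid_rewrite (sum_upto_swap k (i - b1)). rewrite (sum_upto_swap j (i - b1)).
  apply sum_upto_ext. intros c1 _. apply sum_upto_ext. intros b2 _.
  rewrite (sum_upto_swap k (j - b2)).
  apply sum_upto_ext. intros c2 _. apply sum_upto_ext. intros b3 _. apply sum_upto_ext. intros c3 _.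
  replace (b1 + c1 - b1)%nat with c1 by lia. replace (b2 + c2 - b2)%nat with c2 by lia.
  replace (b3 + c3 - b3)%nat with c3 by lia.
  replace (i - (b1 + c1))%nat with (i - b1 - c1)%nat by lia.
  replace (j - (b2 + c2))%nat with (j - b2 - c2)%nat by lia.
  replace (k - (b3 + c3))%nat with (k - b3 - c3)%nat by lia. ring.
Qed.

Definition monomial (r : R) (p q u : nat) : fps := fun i j k =>
  if (Nat.eqb i p && Nat.eqb j q && Nat.eqb k u)%bool then r else 0.

Lemma fmul_monomial r p q u F i j k :
  fmul (monomial r p q u) F i j k =
  if (Nat.leb p i && Nat.leb q j && Nat.leb u k)%bool
  then r * F (i - p)%nat (j - q)%nat (k - u)%nat else 0.
Proof.
  unfold monomial. rewrite fmul_eq.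
  rewrite (sum_upto_single i p).
  2:{ intros a Ha%Nat.eqb_neq. apply sum_upto_zero; intros b _. apply sum_upto_zero; intros d _.
      rewrite Ha. cbn [andb]. ring. }
  destruct (Nat.leb p i); cbn [andb]; [|reflexivity].
  rewrite (sum_upto_single j q).
  2:{ intros b Hb%Nat.eqb_neq. apply sum_upto_zero; intros d _.
      rewrite Nat.eqb_refl, Hb. cbn [andb]. ring. }
  destruct (Nat.leb q j); cbn [andb]; [|reflexivity].
  rewrite (sum_upto_single k u).
  2:{ intros d Hd%Nat.eqb_neq. rewrite !Nat.eqb_refl, Hd. cbn [andb]. ring. }
  destruct (Nat.leb u k); cbn [andb]; [|reflexivity].
  now rewrite !Nat.eqb_refl.
Qed.

Lemma fconst_monomial r : fconst r = monomial r 0 0 0.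
Proof. apply fps_ext. intros [] [] []; reflexivity. Qed.

Lemma fmul_fconst r F i j k : fmul (fconst r) F i j k = r * F i j k.
Proof. rewrite fconst_monomial, fmul_monomial. cbn. now rewrite !Nat.sub_0_r. Qed.

Lemma fmul_fX F : fmul fX F = fun i j k => match i with O => 0 | S i' => F i' j k end.
Proof.
  replace fX with (monomial 1 1 0 0) by (apply fps_ext; intros [|[]] [] []; reflexivity).
  apply fps_ext. intros i j k. rewrite fmul_monomial.
  destruct i; cbn; [reflexivity|]. rewrite !Nat.sub_0_r. ring.
Qed.

Lemma fmul_fY F : fmul fY F = fun i j k => match j with O => 0 | S j' => F i j' k end.
Proof.
  replace fY with (monomial 1 0 1 0) by (apply fps_ext; intros [] [|[]] []; reflexivity).
  apply fps_ext. intros i j k. rewrite fmul_monomial.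
  destruct j; cbn; [reflexivity|]. rewrite !Nat.sub_0_r. ring.
Qed.

Lemma fmul_fZ F : fmul fZ F = fun i j k => match k with O => 0 | S k' => F i j k' end.
Proof.
  replace fZ with (monomial 1 0 0 1) by (apply fps_ext; intros [] [] [|[]]; reflexivity).
  apply fps_ext. intros i j k. rewrite fmul_monomial.
  destruct k; cbn; [reflexivity|]. rewrite !Nat.sub_0_r. ring.
Qed.

Lemma fmul_000 f g : fmul f g 0%nat 0%nat 0%nat = f 0%nat 0%nat 0%nat * g 0%nat 0%nat 0%nat.
Proof. rewrite fmul_eq, !sum_upto_0. reflexivity. Qed.

Definition fzero : fps := fconst 0.
Definition fopp (f : fps) : fps := fun i j k => - f i j k.

Lemma fps_ring_theory : ring_theory fzero fone fadd fmul fsub fopp (@eq fps).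
Proof.
  split; intros; try apply fps_ext; intros.
  - unfold fadd, fzero, fconst. destruct i, j, k; ring.
  - unfold fadd. ring.
  - unfold fadd. ring.
  - unfold fone. rewrite fmul_fconst. ring.
  - now rewrite fmul_comm.
  - now rewrite fmul_assoc.
  - unfold fadd at 2. rewrite !fmul_eq, <- sum_upto_plus. apply sum_upto_ext. intros.
    rewrite <- sum_upto_plus. apply sum_upto_ext. intros.
    rewrite <- sum_upto_plus. apply sum_upto_ext. intros. unfold fadd. ring.
  - unfold fsub, fadd, fopp. ring.
  - unfold fadd, fopp, fzero, fconst. destruct i, j, k; ring.
Qed.

Add Ring fps_ring : fps_ring_theory.

Lemma fconst_mul a b : fconst (a * b) = fmul (fconst a) (fconst b).
Proof. apply fps_ext. intros i j k. rewrite fmul_fconst. unfold fconst. destruct i, j, k; ring. Qed.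

Lemma ftwo_eq : ftwo = fadd fone fone.
Proof. apply fps_ext. intros i j k. unfold ftwo, fone, fadd, fconst. destruct i, j, k; ring. Qed.

Lemma fpow_low g : g 0%nat 0%nat 0%nat = 0 ->
  forall n i j k, (i + j + k < n)%nat -> fpow g n i j k = 0.
Proof.
  intros Hg0 n. induction n as [|n IH]; intros i j k Hn; [lia|].
  cbn [fpow]. rewrite fmul_eq.
  apply sum_upto_zero; intros a Ha.
  apply sum_upto_zero; intros b Hb.
  apply sum_upto_zero; intros d Hd.
  destruct (Nat.eq_dec (a + b + d) 0) as [H0|H0].
  - replace a with 0%nat by lia. replace b with 0%nat by lia. replace d with 0%nat by lia.
    rewrite Hg0. ring.
  - rewrite IH by lia. ring.
Qed.

Definition geom_partial (g : fps) (N : nat) : fps :=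
  fun i j k => sumR (fun n => fpow g n i j k) (seq 0 (S N)).

Lemma geom_partial_telescope g N :
  fmul (fsub fone g) (geom_partial g N) = fsub fone (fpow g (S N)).
Proof.
  induction N as [|N IH].
  - replace (geom_partial g 0) with fone
      by (apply fps_ext; intros; unfold geom_partial, sumR; cbn [seq fold_right fpow];
          symmetry; apply Rplus_0_r).
    cbn [fpow]. fold fone. ring.
  - replace (geom_partial g (S N)) with (fadd (geom_partial g N) (fpow g (S N)))
      by (apply fps_ext; intros; unfold geom_partial, fadd; now rewrite (sumR_seq_succ _ 0 (S N))).
    transitivity (fadd (fmul (fsub fone g) (geom_partial g N)) (fmul (fsub fone g) (fpow g (S N))));
      [ring|].
    rewrite IH. cbn [fpow]. ring.
Qed.

Lemma geom_partial_stable g : g 0%nat 0%nat 0%nat = 0 ->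
  forall M i j k, (i + j + k <= M)%nat -> geom_partial g M i j k = geom_partial g (i + j + k) i j k.
Proof.
  intros Hg0 M i j k HM. induction HM as [|M HM IH]; [reflexivity|].
  unfold geom_partial in *. rewrite sumR_seq_succ, IH, (fpow_low g Hg0) by lia. ring.
Qed.

Lemma fmul_ext_box f F G i j k :
  (forall a b d, (a <= i)%nat -> (b <= j)%nat -> (d <= k)%nat -> F a b d = G a b d) ->
  fmul f F i j k = fmul f G i j k.
Proof.
  intros H. rewrite !fmul_eq.
  apply sum_upto_ext; intros a Ha. apply sum_upto_ext; intros b Hb. apply sum_upto_ext; intros d Hd.
  rewrite H by lia. reflexivity.
Qed.

Lemma fmul_finv f : f 0%nat 0%nat 0%nat <> 0 -> fmul f (finv f) = fone.
Proof.
  intros Hf0. set (c0 := f 0%nat 0%nat 0%nat) in *.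
  set (g := fsub (fconst 1) (fscale (/ c0) f)).
  assert (Hg0 : g 0%nat 0%nat 0%nat = 0)
    by (unfold g, fsub, fscale, fconst; fold c0; field; exact Hf0).
  assert (Hf : f = fmul (fconst c0) (fsub fone g)).
  { apply fps_ext. intros. rewrite fmul_fconst.
    unfold g, fsub, fscale, fone, fconst. field. exact Hf0. }
  apply fps_ext. intros i j k.
  (* up to degree i + j + k, [finv f] is [/ c0] times a partial geometric sum of [g] *)
  rewrite (fmul_ext_box f _ (fmul (fconst (/ c0)) (geom_partial g (i + j + k)))).
  2:{ intros a b d Ha Hb Hd. rewrite fmul_fconst. unfold finv. fold c0 g.
      symmetry. f_equal. apply geom_partial_stable; [exact Hg0 | lia]. }
  rewrite Hf at 1.
  transitivity (fmul (fconst (c0 * / c0)) (fmul (fsub fone g) (geom_partial g (i + j + k))) i j k).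
  { rewrite fconst_mul. apply (f_equal (fun F : fps => F i j k)). ring. }
  rewrite Rinv_r, geom_partial_telescope by exact Hf0.
  rewrite fmul_fconst, Rmult_1_l. unfold fsub. rewrite (fpow_low g Hg0) by lia. ring.
Qed.

Lemma finv_eq f h : f 0%nat 0%nat 0%nat <> 0 -> fmul f h = fone -> finv f = h.
Proof.
  intros Hf0 Hfh.
  transitivity (fmul (fmul f h) (finv f)); [rewrite Hfh; ring|].
  transitivity (fmul h (fmul f (finv f))); [ring|].
  rewrite fmul_finv by exact Hf0. ring.
Qed.

(** * Correlation sums *)

Definition scaled_delta (lam t k : nat) : R :=
  2 ^ lam * delta (Z.of_nat (lam + 1) - Z.of_nat k) t.

Definition shift (F : nat -> R) (k : nat) : R := match k with O => 0 | S k' => F k' end.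

Lemma scaled_delta_double lam t k : (s t <= lam + 1)%nat ->
  scaled_delta (S lam) (2 * t) k = 2 * shift (scaled_delta lam t) k.
Proof.
  intros Hs. unfold scaled_delta, shift. rewrite delta_double. destruct k as [|k].
  - rewrite delta_high by lia. ring.
  - replace (Z.of_nat (S lam + 1) - Z.of_nat (S k))%Z with (Z.of_nat (lam + 1) - Z.of_nat k)%Z
      by lia.
    cbn [pow]. ring.
Qed.

Lemma scaled_delta_double_plus1 lam t k : (s (S t) <= lam + 1)%nat ->
  scaled_delta (S lam) (2 * t + 1) k
  = scaled_delta lam t k + shift (shift (scaled_delta lam (S t))) k.
Proof.
  intros Hs. unfold scaled_delta, shift. rewrite delta_double_plus1, (Nat.add_1_r t).
  replace (Z.of_nat (S lam + 1) - Z.of_nat k - 1)%Z with (Z.of_nat (lam + 1) - Z.of_nat k)%Z by lia.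
  destruct k as [|[|k]].
  - rewrite (delta_high _ (S t)) by lia. cbn [pow]. field.
  - rewrite (delta_high _ (S t)) by lia. cbn [pow]. field.
  - replace (Z.of_nat (S lam + 1) - Z.of_nat (S (S k)) + 1)%Z
      with (Z.of_nat (lam + 1) - Z.of_nat k)%Z by lia.
    cbn [pow]. field.
Qed.

Lemma s_le_in_block lam t : In t (block lam) -> (s t <= lam + 1)%nat /\ (s (S t) <= lam + 1)%nat.
Proof.
  unfold block. rewrite in_seq. intros Ht. rewrite Nat.add_1_r. split.
  - apply s_le_of_lt_pow2. rewrite Nat.pow_succ_r'. lia.
  - apply s_le_of_le_pow2; [lia|]. rewrite Nat.pow_succ_r'. lia.
Qed.

Lemma sumR_block_succ (f : nat -> R) lam :
  sumR f (block (S lam)) = sumR (fun t => f (2 * t)%nat + f (2 * t + 1)%nat) (block lam).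
Proof. unfold block. rewrite Nat.pow_succ_r'. apply sumR_seq_double. Qed.

Definition corr (p q : nat) : fps := fun lam k l =>
  sumR (fun t => scaled_delta lam (p + t) k * scaled_delta lam (q + t) l) (block lam).

Lemma Agen_corr : Agen = corr 0 0.
Proof.
  apply fps_ext. intros lam k l. unfold Agen, a, corr, scaled_delta. rewrite <- sumR_scal_l.
  apply sumR_ext. intros t. replace (4 ^ lam) with (2 ^ lam * 2 ^ lam)
    by (rewrite <- Rpow_mult_distr; f_equal; ring).
  cbn [Nat.add]. ring.
Qed.

Lemma corr_11 : corr 1 1 = corr 0 0.
Proof.
  apply fps_ext. intros lam k l. unfold corr, block.
  rewrite (sumR_seq_shift1 (fun t => scaled_delta lam t k * scaled_delta lam t l)).
  replace (2 ^ lam + 2 ^ lam)%nat with (2 ^ S lam)%nat by (rewrite Nat.pow_succ_r'; lia).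
  unfold scaled_delta. rewrite !delta_pow2. cbn [Nat.add]. ring.
Qed.

Lemma corr_0 p q k l : (p <= 1)%nat -> (q <= 1)%nat ->
  corr p q 0%nat k l = (/ 2) ^ S k * (/ 2) ^ S l.
Proof.
  intros Hp Hq.
  assert (H1 : forall r j, (r <= 1)%nat -> scaled_delta 0 (r + 1) j = (/ 2) ^ S j).
  { intros r j Hr. unfold scaled_delta.
    replace (r + 1)%nat with (2 ^ r)%nat by (destruct r as [|[|]]; cbn; lia).
    rewrite delta_pow2, <- delta_1. cbn. ring. }
  unfold corr, block. change (seq (2 ^ 0) (2 ^ 0)) with [1%nat].
  rewrite sumR_cons, (H1 p k Hp), (H1 q l Hq). cbn. ring.
Qed.

Lemma sumR_const0 (l : list nat) : sumR (fun _ => 0) l = 0.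
Proof. now apply sumR_zero. Qed.

Ltac finish_corr_recurrence k l :=
  rewrite ?sumR_plus, ?sumR_scal_l;
  unfold ftwo, fadd; rewrite ?fmul_fconst, ?fmul_fY, ?fmul_fZ; cbv beta;
  destruct k as [|[|k]], l as [|[|l]]; cbn [shift]; unfold corr; cbn [Nat.add];
  repeat setoid_rewrite Rmult_0_l; repeat setoid_rewrite Rmult_0_r; rewrite ?sumR_const0; ring.

Lemma corr_00_succ lam k l :
  corr 0 0 (S lam) k l =
  (corr 0 0 + ftwo * (ftwo * (fY * (fZ * corr 0 0))) + fZ * (fZ * corr 0 1)
   + fY * (fY * corr 1 0) + fY * (fY * (fZ * (fZ * corr 1 1))))%FPS lam k l.
Proof.
  set (G := scaled_delta lam).
  unfold corr at 1. rewrite sumR_block_succ.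
  rewrite (sumR_ext_in _ (fun t =>
      4 * (shift (G t) k * shift (G t) l) + G t k * G t l + G t k * shift (shift (G (S t))) l
      + shift (shift (G (S t))) k * G t l + shift (shift (G (S t))) k * shift (shift (G (S t))) l)).
  2:{ intros t [Ht HSt]%s_le_in_block. cbn [Nat.add].
      rewrite !scaled_delta_double, !scaled_delta_double_plus1 by assumption. subst G. ring. }
  subst G. finish_corr_recurrence k l.
Qed.

Lemma corr_01_succ lam k l :
  corr 0 1 (S lam) k l =
  (ftwo * (fY * corr 0 0) + ftwo * (fY * (fZ * (fZ * corr 0 1))) + ftwo * (fZ * corr 0 1)
   + ftwo * (fY * (fY * (fZ * corr 1 1))))%FPS lam k l.
Proof.
  set (G := scaled_delta lam).
  unfold corr at 1. rewrite sumR_block_succ.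
  rewrite (sumR_ext_in _ (fun t =>
      2 * (shift (G t) k * G t l) + 2 * (shift (G t) k * shift (shift (G (S t))) l)
      + 2 * (G t k * shift (G (S t)) l) + 2 * (shift (shift (G (S t))) k * shift (G (S t)) l))).
  2:{ intros t [Ht HSt]%s_le_in_block. cbn [Nat.add].
      replace (S (2 * t)) with (2 * t + 1)%nat by lia.
      replace (S (2 * t + 1)) with (2 * S t)%nat by lia.
      rewrite !scaled_delta_double, !scaled_delta_double_plus1 by assumption. subst G. ring. }
  subst G. finish_corr_recurrence k l.
Qed.

Lemma corr_10_succ lam k l :
  corr 1 0 (S lam) k l =
  (ftwo * (fZ * corr 0 0) + ftwo * (fY * (fY * (fZ * corr 1 0))) + ftwo * (fY * corr 1 0)
   + ftwo * (fY * (fZ * (fZ * corr 1 1))))%FPS lam k l.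
Proof.
  set (G := scaled_delta lam).
  unfold corr at 1. rewrite sumR_block_succ.
  rewrite (sumR_ext_in _ (fun t =>
      2 * (G t k * shift (G t) l) + 2 * (shift (shift (G (S t))) k * shift (G t) l)
      + 2 * (shift (G (S t)) k * G t l) + 2 * (shift (G (S t)) k * shift (shift (G (S t))) l))).
  2:{ intros t [Ht HSt]%s_le_in_block. cbn [Nat.add].
      replace (S (2 * t)) with (2 * t + 1)%nat by lia.
      replace (S (2 * t + 1)) with (2 * S t)%nat by lia.
      rewrite !scaled_delta_double, !scaled_delta_double_plus1 by assumption. subst G. ring. }
  subst G. finish_corr_recurrence k l.
Qed.

(** * The functional equations and their solution *)

Definition corr_base : fps := fun lam k l =>
  match lam with O => (/ 2) ^ S k * (/ 2) ^ S l | S _ => 0 end.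

Lemma corr_eq_of_succ p q (F : fps) : (p <= 1)%nat -> (q <= 1)%nat ->
  (forall lam k l, corr p q (S lam) k l = F lam k l) -> corr p q = (corr_base + fX * F)%FPS.
Proof.
  intros Hp Hq HF. apply fps_ext.
  intros [|lam] k l; unfold fadd, corr_base; rewrite fmul_fX; cbv beta iota.
  - rewrite corr_0 by assumption. ring.
  - rewrite HF. ring.
Qed.

Lemma corr_00_eq :
  corr 0 0 = (corr_base + fX * (corr 0 0 + ftwo * (ftwo * (fY * (fZ * corr 0 0)))
    + fZ * (fZ * corr 0 1) + fY * (fY * corr 1 0) + fY * (fY * (fZ * (fZ * corr 0 0)))))%FPS.
Proof. rewrite <- corr_11 at 4. apply corr_eq_of_succ; auto using corr_00_succ. Qed.

Lemma corr_01_eq :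
  corr 0 1 = (corr_base + fX * (ftwo * (fY * corr 0 0) + ftwo * (fY * (fZ * (fZ * corr 0 1)))
    + ftwo * (fZ * corr 0 1) + ftwo * (fY * (fY * (fZ * corr 0 0)))))%FPS.
Proof. rewrite <- corr_11 at 2. apply corr_eq_of_succ; auto using corr_01_succ. Qed.

Lemma corr_10_eq :
  corr 1 0 = (corr_base + fX * (ftwo * (fZ * corr 0 0) + ftwo * (fY * (fY * (fZ * corr 1 0)))
    + ftwo * (fY * corr 1 0) + ftwo * (fY * (fZ * (fZ * corr 0 0)))))%FPS.
Proof. rewrite <- corr_11 at 2. apply corr_eq_of_succ; auto using corr_10_succ. Qed.

Lemma finv_two_minus_YZ : finv ((ftwo - fY) * (ftwo - fZ))%FPS = corr_base.
Proof.
  apply finv_eq.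
  { rewrite fmul_000. cbv [fsub ftwo fY fZ fconst]. lra. }
  transitivity (ftwo * ftwo * corr_base - ftwo * (fY * corr_base) - ftwo * (fZ * corr_base)
                + fY * (fZ * corr_base))%FPS; [ring|].
  apply fps_ext. intros i k l. unfold fsub, fadd, ftwo.
  rewrite <- fconst_mul, !fmul_fconst, !fmul_fY, !fmul_fZ.
  unfold fone, fconst, corr_base. destruct i, k, l; cbn; field.
Qed.

Definition den_z : fps := (fone - ftwo * fX * fZ * (fone + fY * fZ))%FPS.
Definition den_y : fps := (fone - ftwo * fX * fY * (fone + fY * fZ))%FPS.

Definition closed_num (iz iy : fps) : fps := (fone + fX * fZ * fZ * iz + fX * fY * fY * iy)%FPS.
Definition closed_den (iz iy : fps) : fps :=
  (fone - fX * (fone + fY * fZ) * (fone + fY * fZ) - fX * fY * fZ * iz - fX * fY * fZ * iy)%FPS.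

Lemma Aclosed_eq :
  Aclosed = (finv ((ftwo - fY) * (ftwo - fZ))
             * (closed_num (finv den_z) (finv den_y)
                * finv (closed_den (finv den_z) (finv den_y))))%FPS.
Proof. unfold Aclosed, fdiv. fold den_z den_y. unfold closed_num, closed_den. ring. Qed.

Lemma fps_eq_of_combination2 (P Q L1 R1 L2 R2 K1 K2 : fps) :
  L1 = R1 -> L2 = R2 -> (P - Q = K1 * (L1 - R1) + K2 * (L2 - R2))%FPS -> P = Q.
Proof. intros -> -> H. transitivity (P - Q + Q)%FPS; [ring|]. rewrite H. ring. Qed.

Lemma fps_eq_of_combination3 (P Q L1 R1 L2 R2 L3 R3 K1 K2 K3 : fps) :
  L1 = R1 -> L2 = R2 -> L3 = R3 ->
  (P - Q = K1 * (L1 - R1) + K2 * (L2 - R2) + K3 * (L3 - R3))%FPS -> P = Q.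
Proof. intros -> -> -> H. transitivity (P - Q + Q)%FPS; [ring|]. rewrite H. ring. Qed.

Lemma corr_system_solution (A U V B iz iy iD : fps) :
  (den_z * iz = fone)%FPS -> (den_y * iy = fone)%FPS -> (closed_den iz iy * iD = fone)%FPS ->
  A = (B + fX * (A + ftwo * (ftwo * (fY * (fZ * A)))
    + fZ * (fZ * U) + fY * (fY * V) + fY * (fY * (fZ * (fZ * A)))))%FPS ->
  U = (B + fX * (ftwo * (fY * A) + ftwo * (fY * (fZ * (fZ * U)))
    + ftwo * (fZ * U) + ftwo * (fY * (fY * (fZ * A)))))%FPS ->
  V = (B + fX * (ftwo * (fZ * A) + ftwo * (fY * (fY * (fZ * V)))
    + ftwo * (fY * V) + ftwo * (fY * (fZ * (fZ * A)))))%FPS ->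
  A = (B * (closed_num iz iy * iD))%FPS.
Proof.
  intros Hz Hy Hd HA HU HV.
  unfold den_z, den_y, closed_num, closed_den in *. rewrite ftwo_eq in *.
  assert (HU' : U = (iz * (B + (fone + fone) * fX * fY * (fone + fY * fZ) * A))%FPS)
    by (apply (fps_eq_of_combination2 _ _ _ _ _ _ iz (fopp U) HU Hz); ring).
  assert (HV' : V = (iy * (B + (fone + fone) * fX * fZ * (fone + fY * fZ) * A))%FPS)
    by (apply (fps_eq_of_combination2 _ _ _ _ _ _ iy (fopp V) HV Hy); ring).
  rewrite HU', HV' in HA.
  assert (HDA : ((fone - fX * (fone + fY * fZ) * (fone + fY * fZ) - fX * fY * fZ * iz
                  - fX * fY * fZ * iy) * A
                 = B * (fone + fX * fZ * fZ * iz + fX * fY * fY * iy))%FPS)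
    by (apply (fps_eq_of_combination3 _ _ _ _ _ _ _ _ fone (fopp (fX * fY * fZ * A)%FPS)
                 (fopp (fX * fY * fZ * A)%FPS) HA Hz Hy); ring).
  apply (fps_eq_of_combination2 _ _ _ _ _ _ iD (fopp A) HDA Hd). ring.
Qed.

Theorem Agen_eq_Aclosed : Agen = Aclosed.
Proof.
  rewrite Agen_corr, Aclosed_eq, finv_two_minus_YZ.
  apply corr_system_solution with (U := corr 0 1) (V := corr 1 0);
    [..| exact corr_00_eq | exact corr_01_eq | exact corr_10_eq];
    apply fmul_finv; unfold closed_den, den_z, den_y, fsub, fadd; rewrite !fmul_000;
    cbv [fone fconst ftwo fX fY fZ]; lra.
Qed.

(** * Sums of [c_t ^ 2] and [ct_t ^ 2] *)

Definition indicator (b : bool) : R := if b then 1 else 0.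

Lemma cnt_sumR P (Q : nat -> nat -> bool) L N :
  (forall n, indicator (P n) = sumR (fun k => indicator (Q k n)) L) ->
  INR (cnt P N) = sumR (fun k => INR (cnt (Q k) N)) L.
Proof.
  intros H. induction N as [|N IH]; [symmetry; now apply sumR_zero|].
  rewrite cnt_S, plus_INR, IH.
  rewrite (sumR_ext (fun k => INR (cnt (Q k) (S N)))
                    (fun k => INR (cnt (Q k) N) + indicator (Q k N))).
  2:{ intros k. rewrite cnt_S, plus_INR. unfold indicator. now destruct (Q k N). }
  rewrite sumR_plus, <- H. unfold indicator. now destruct (P N).
Qed.

Lemma is_lim_seq_sumR (u : nat -> nat -> R) (l : nat -> R) L :
  (forall k, In k L -> is_lim_seq (u k) (l k)) ->
  is_lim_seq (fun N => sumR (fun k => u k N) L) (sumR l L).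
Proof.
  induction L as [|k L IH]; intros H.
  - apply is_lim_seq_const.
  - apply is_lim_seq_plus'; [apply H; now left | apply IH; intros; apply H; now right].
Qed.

Lemma density_sumR P (Q : nat -> nat -> bool) L :
  (forall n, indicator (P n) = sumR (fun k => indicator (Q k n)) L) ->
  (forall k, In k L -> has_density (Q k) (density (Q k))) ->
  density P = sumR (fun k => density (Q k)) L.
Proof.
  intros Hind HQ. apply density_eq.
  apply (is_lim_seq_ext (fun N => sumR (fun k => ratio (Q k) N) L)).
  - intros N. unfold ratio. rewrite (cnt_sumR P Q L N Hind). unfold Rdiv. now rewrite sumR_scal_r.
  - now apply is_lim_seq_sumR.
Qed.

Lemma sumR_indicator_eqb (d c : Z) a n :
  sumR (fun k => indicator (Z.eqb d (c - Z.of_nat k))) (seq a n) =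
  indicator ((c - Z.of_nat (a + n) <? d)%Z && (d <=? c - Z.of_nat a)%Z).
Proof.
  revert a. induction n as [|n IH]; intros a.
  - rewrite Nat.add_0_r. unfold indicator. cbn.
    destruct (Z.ltb_spec (c - Z.of_nat a) d), (Z.leb_spec d (c - Z.of_nat a)); cbn; lia || ring.
  - cbn [seq]. rewrite sumR_cons, IH. unfold indicator.
    destruct (Z.eqb_spec d (c - Z.of_nat a)), (Z.ltb_spec (c - Z.of_nat (S a + n)) d),
      (Z.leb_spec d (c - Z.of_nat (S a))), (Z.ltb_spec (c - Z.of_nat (a + S n)) d),
      (Z.leb_spec d (c - Z.of_nat a)); cbn; try ring; lia.
Qed.

Lemma c_eq_sumR_delta lam t : In t (block lam) ->
  c t = sumR (fun k => delta (Z.of_nat (lam + 1) - Z.of_nat k) t) (seq 0 (lam + 2)).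
Proof.
  intros [Hs _]%s_le_in_block.
  apply (density_sumR _ (fun k => sdiff_is (Z.of_nat (lam + 1) - Z.of_nat k) t)).
  - intros n. unfold sdiff_is. rewrite sumR_indicator_eqb. f_equal.
    pose proof (sdiff_le n t). unfold sdiff in *.
    destruct (Nat.leb_spec (s n) (s (n + t))); symmetry;
      [apply Bool.andb_true_iff | apply Bool.andb_false_iff];
      rewrite ?Z.ltb_lt, ?Z.leb_le, ?Z.ltb_ge, ?Z.leb_gt; lia.
  - intros k _. apply delta_has_density.
Qed.

Lemma ct_eq_sumR_delta lam t : In t (block lam) ->
  ct t = sumR (fun k => delta (Z.of_nat (lam + 1) - Z.of_nat k) t) (seq 0 (lam + 1)).
Proof.
  intros [Hs _]%s_le_in_block.
  apply (density_sumR _ (fun k => sdiff_is (Z.of_nat (lam + 1) - Z.of_nat k) t)).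
  - intros n. unfold sdiff_is. rewrite sumR_indicator_eqb. f_equal.
    pose proof (sdiff_le n t). unfold sdiff in *.
    destruct (Nat.ltb_spec (s n) (s (n + t))); symmetry;
      [apply Bool.andb_true_iff | apply Bool.andb_false_iff];
      rewrite ?Z.ltb_lt, ?Z.leb_le, ?Z.ltb_ge, ?Z.leb_gt; lia.
  - intros k _. apply delta_has_density.
Qed.

Lemma sumR_block_sq (f : nat -> R) lam m :
  (forall t, In t (block lam) ->
     f t = sumR (fun k => delta (Z.of_nat (lam + 1) - Z.of_nat k) t) (seq 0 m)) ->
  sumR (fun t => f t ^ 2) (block lam)
  = / 4 ^ lam * sumR (fun k => sumR (fun l => a lam k l) (seq 0 m)) (seq 0 m).
Proof.
  intros Hf. unfold a.
  rewrite (sumR_ext_in _ (fun t => sumR (fun k => sumR (fun l =>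
      delta (Z.of_nat (lam + 1) - Z.of_nat k) t * delta (Z.of_nat (lam + 1) - Z.of_nat l) t)
      (seq 0 m)) (seq 0 m))).
  2:{ intros t Ht. rewrite Hf by exact Ht. rewrite <- sumR_mul_sumR. cbn [pow]. ring. }
  rewrite sumR_swap. setoid_rewrite (sumR_swap _ (block lam)).
  setoid_rewrite sumR_scal_l. rewrite sumR_scal_l.
  field. apply pow_nonzero. lra.
Qed.

Definition geom_YZ : fps := fun i _ _ => match i with O => 1 | S _ => 0 end.

Lemma finv_one_minus_YZ : finv ((fone - fY) * (fone - fZ))%FPS = geom_YZ.
Proof.
  apply finv_eq.
  { rewrite fmul_000. cbv [fsub fone fconst fY fZ]. lra. }
  transitivity (geom_YZ - fY * geom_YZ - fZ * geom_YZ + fY * (fZ * geom_YZ))%FPS; [ring|].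
  rewrite !fmul_fY, !fmul_fZ. apply fps_ext. intros i k l.
  unfold fsub, fadd, geom_YZ, fone, fconst. destruct i, k, l; ring.
Qed.

Lemma coef_div_one_minus_YZ F i J K :
  coef (F / ((fone - fY) * (fone - fZ)))%FPS i J K
  = sumR (fun k => sumR (fun l => F i k l) (seq 0 (S K))) (seq 0 (S J)).
Proof.
  unfold coef, fdiv. rewrite finv_one_minus_YZ, fmul_eq.
  rewrite (sum_upto_ext i _ (fun i1 =>
    if Nat.eqb i1 i then sum_upto J (fun k => sum_upto K (fun l => F i k l)) else 0)).
  - rewrite (sum_upto_single i i), Nat.leb_refl, Nat.eqb_refl; [reflexivity|].
    intros i1 Hi1%Nat.eqb_neq. now rewrite Hi1.
  - intros i1 Hi1. destruct (Nat.eqb_spec i1 i) as [->|Hne].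
    + rewrite Nat.sub_diag. apply sum_upto_ext. intros k _. apply sum_upto_ext. intros l _.
      unfold geom_YZ. ring.
    + apply sum_upto_zero. intros k _. apply sum_upto_zero. intros l _.
      replace (i - i1)%nat with (S (i - i1 - 1)) by lia. unfold geom_YZ. ring.
Qed.

Lemma sumR_block_c_sq lam :
  sumR (fun t => c t ^ 2) (block lam)
  = / 4 ^ lam * sumR (fun k => sumR (fun l => a lam k l) (seq 0 (lam + 2))) (seq 0 (lam + 2)).
Proof. apply sumR_block_sq, c_eq_sumR_delta. Qed.

Lemma sumR_block_ct_sq lam :
  sumR (fun t => ct t ^ 2) (block lam)
  = / 4 ^ lam * sumR (fun k => sumR (fun l => a lam k l) (seq 0 (lam + 1))) (seq 0 (lam + 1)).
Proof. apply sumR_block_sq, ct_eq_sumR_delta. Qed.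

Lemma Rinv_pow8 n : / 8 ^ n = / 2 ^ n * / 4 ^ n.
Proof. rewrite <- Rinv_mult, <- Rpow_mult_distr. now replace (2 * 4) with 8 by ring. Qed.

Theorem lemma4p2 :
  (forall lam k l : nat, coef Agen lam k l = coef Aclosed lam k l) /\
  (forall lam : nat,
     sumR (fun t => c t ^ 2) (block lam) =
       / 4 ^ lam * sumR (fun k => sumR (fun l => a lam k l) (seq 0 (lam + 2)))
                        (seq 0 (lam + 2))) /\
  (forall lam : nat,
     sumR (fun t => ct t ^ 2) (block lam) =
       / 4 ^ lam * sumR (fun k => sumR (fun l => a lam k l) (seq 0 (lam + 1)))
                        (seq 0 (lam + 1))) /\
  (forall lam : nat,
     / 2 ^ lam * sumR (fun t => c t ^ 2) (block lam) =
       / 8 ^ lam * coef (Agen / ((fone - fY) * (fone - fZ)))%FPS lam (lam + 1) (lam + 1)) /\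
  (forall lam : nat,
     / 2 ^ lam * sumR (fun t => ct t ^ 2) (block lam) =
       / 8 ^ lam * coef (Agen / ((fone - fY) * (fone - fZ)))%FPS lam lam lam).
Proof.
  split; [intros; now rewrite Agen_eq_Aclosed|].
  split; [exact sumR_block_c_sq|]. split; [exact sumR_block_ct_sq|].
  split; intros lam; rewrite ?sumR_block_c_sq, ?sumR_block_ct_sq, coef_div_one_minus_YZ, Rinv_pow8.
  - rewrite <- Nat.add_succ_r. unfold Agen. ring.
  - rewrite Nat.add_1_r. unfold Agen. ring.
Qed.
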